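(* Let $I$ be a modal intuitionistic formula, $\varphi(x)=ST_{22}(I,x)$ and $k=r(\varphi)$. Let $\Theta\supseteq\Sigma_\varphi$, let $(M_1,t),(M_2,u)$ be pointed $\Theta$-models, let $l\in\mathbb{N}$, and let $(A,B)$ be a $(2,2)$-modal $\langle(M_1,t),(M_2,u)\rangle_l$-asimulation. Then for all $i,j\in\{1,2\}$, all $m$, all $(\bar a_m,a)\in U_i^{m+1}$ and $(\bar b_m,b)\in U_j^{m+1}$: if $(\bar a_m,a)\,A\,(\bar b_m,b)$, $m+k\le l$ and $a\models_i\varphi(x)$, then $b\models_j\varphi(x)$.
   Context: Correspondence language: classical first-order logic without identity over $\Sigma=\{R,R_\Box,R_\Diamond,P_1,P_2,\dots\}$ ($R,R_\Box,R_\Diamond$ binary, $P_n$ unary). $\Theta$ is a subset of $\Sigma$ containing $R,R_\Box,R_\Diamond$; $\Theta$-models $M_k=\langle U_k,\iota_k\rangle$, with $R_k=\iota_k(R)$, $R_{\Box k}=\iota_k(R_\Box)$, $R_{\Diamond k}=\iota_k(R_\Diamond)$. $\Sigma_\varphi=\{R,R_\Box,R_\Diamond\}\cup\{P_n:P_n\text{ occurs in }\varphi\}$. $a\models_k\varphi(x)$ means $\varphi$ holds in $M_k$ under assignments sending $x$ to $a$. $r(\varphi)$ is the quantifier depth: $r$ of atoms and $\bot$ is $0$, $r(\varphi\circ\psi)=\max(r(\varphi),r(\psi))$ for binary connectives, $r(Qx\varphi)=r(\varphi)+1$. $s\overset{\leftrightarrow}{A}t$ means $sAt$ and $tAs$.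 Modal intuitionistic formulas: built from $p_n,\bot$ with $\wedge,\vee,\to,\Box,\Diamond$. $ST_{22}$: $ST_{22}(p_n,x)=P_n(x)$, $ST_{22}(\bot,x)=\bot$, commutes with $\wedge,\vee$; $ST_{22}(I\to J,x)=\forall y(R(x,y)\to(ST_{22}(I,y)\to ST_{22}(J,y)))$; $ST_{22}(\Box I,x)=\forall y(R(x,y)\to\forall z(R_\Box(y,z)\to ST_{22}(I,z)))$; $ST_{22}(\Diamond I,x)=\forall y(R(x,y)\to\exists z(R_\Diamond(y,z)\wedge ST_{22}(I,z)))$. A $(2,2)$-modal $\langle(M_1,t),(M_2,u)\rangle_l$-asimulation is a pair $(A,B)$ of relations on finite nonempty tuples such that, for all $i,j\in\{1,2\}$, $m$, $\bar a_m,a,c,e\in U_i$, $\bar b_m,b,d,f\in U_j$, unary $P\in\Theta$: $A,B\subseteq\bigcup_{n>0}((U_1^n\times U_2^n)\cup(U_2^n\times U_1^n))$; $tAu$; if $(\bar a_m,a)A(\bar b_m,b)$ and $a\models_iP(x)$ then $b\models_jP(x)$; if $(\bar a_m,a)A(\bar b_m,b)$, $bR_jd$, $m<l$ then some $c\in U_i$ has $aR_ic$ and $(\bar a_m,a,c)\overset{\leftrightarrow}{A}(\bar b_m,b,d)$; if $(\bar a_m,a)A(\bar b_m,b)$, $bR_jd$, $dR_{\Box j}f$, $m+1<l$ then some $c,e\in U_i$ have $aR_ic$, $cR_{\Box i}e$, $(\bar a_m,a,c,e)A(\bar b_m,b,d,f)$; if $(\bar a_m,a)A(\bar b_m,b)$,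 $bR_jd$, $m+1<l$ then some $c\in U_i$ has $aR_ic$ and $(\bar a_m,a,c)B(\bar b_m,b,d)$; if $(\bar a_m,a)B(\bar b_m,b)$, $aR_{\Diamond i}c$, $m<l$ then some $d\in U_j$ has $bR_{\Diamond j}d$ and $(\bar a_m,a,c)A(\bar b_m,b,d)$. *)

From mathcomp Require Import all_boot.
Set Implicit Arguments. Unset Strict Implicit. Unset Printing Implicit Defensive.

Inductive mform : Type :=
| MVar : nat -> mform
| MBot : mform
| MAnd : mform -> mform -> mform
| MOr  : mform -> mform -> mform
| MImp : mform -> mform -> mform
| MBox : mform -> mform
| MDia : mform -> mform.

Inductive fo : Type :=
| FR   : nat -> nat -> fo
| FRb  : nat -> nat -> fo
| FRd  : nat -> nat -> fo
| FP   : nat -> nat -> fo        (* FP n x  =  P_n(x) *)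
| FBot : fo
| FNot : fo -> fo
| FAnd : fo -> fo -> fo
| FOr  : fo -> fo -> fo
| FImp : fo -> fo -> fo
| FAll : nat -> fo -> fo
| FEx  : nat -> fo -> fo.

Fixpoint qdepth (f : fo) : nat :=
  match f with
  | FR _ _ | FRb _ _ | FRd _ _ | FP _ _ | FBot => 0
  | FNot g => qdepth g
  | FAnd g h | FOr g h | FImp g h => maxn (qdepth g) (qdepth h)
  | FAll _ g | FEx _ g => (qdepth g).+1
  end.

Fixpoint occursP (n : nat) (f : fo) : Prop :=
  match f with
  | FP m _ => m = n
  | FR _ _ | FRb _ _ | FRd _ _ | FBot => False
  | FNot g => occursP n g
  | FAnd g h | FOr g h | FImp g h => occursP n g \/ occursP n h
  | FAll _ g | FEx _ g => occursP n g
  end.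

(* Standard translation ST_22.  ST22 I x uses the fresh bound variables
   y := x+1 and z := x+2 (inner translations only mention their own free
   variable, so this choice of names is harmless). *)
Fixpoint ST22 (I : mform) (x : nat) : fo :=
  match I with
  | MVar n => FP n x
  | MBot => FBot
  | MAnd J K => FAnd (ST22 J x) (ST22 K x)
  | MOr J K => FOr (ST22 J x) (ST22 K x)
  | MImp J K =>
      FAll x.+1 (FImp (FR x x.+1) (FImp (ST22 J x.+1) (ST22 K x.+1)))
  | MBox J =>
      FAll x.+1 (FImp (FR x x.+1)
        (FAll x.+2 (FImp (FRb x.+1 x.+2) (ST22 J x.+2))))
  | MDia J =>
      FAll x.+1 (FImp (FR x x.+1)
        (FEx x.+2 (FAnd (FRd x.+1 x.+2) (ST22 J x.+2))))
  end.

Definition xvar : nat := 0.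

(* ---------- Models ----------
   A model interprets R, R_Box, R_Dia and every P_n; the interpretation of
   P_n for n outside Theta plays no role. *)
Record model : Type := Model {
  dom  : Type;
  relR : dom -> dom -> Prop;
  relB : dom -> dom -> Prop;
  relD : dom -> dom -> Prop;
  valP : nat -> dom -> Prop
}.

Definition upd (M : model) (g : nat -> dom M) (v : nat) (a : dom M) : nat -> dom M :=
  fun w => if w == v then a else g w.

Fixpoint sat (M : model) (g : nat -> dom M) (f : fo) : Prop :=
  match f with
  | FR x y => relR (g x) (g y)
  | FRb x y => relB (g x) (g y)
  | FRd x y => relD (g x) (g y)
  | FP n x => valP n (g x)
  | FBot => False
  | FNot h => ~ sat g h
  | FAnd h k => sat g h /\ sat g k
  | FOr h k => sat g h \/ sat g k
  | FImp h k => sat g h -> sat g k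
  | FAll v h => forall a : dom M, sat (upd g v a) h
  | FEx v h => exists a : dom M, sat (upd g v a) h
  end.

Definition sat_at (M : model) (a : dom M) (phi : fo) : Prop :=
  forall g : nat -> dom M, g xvar = a -> sat g phi.

Inductive side : Type := S1 | S2.

Definition side_model (M1 M2 : model) (i : side) : model :=
  match i with S1 => M1 | S2 => M2 end.

Definition tuprel (M1 M2 : model) : Type :=
  forall i j : side, seq (dom (side_model M1 M2 i)) -> seq (dom (side_model M1 M2 j)) -> Prop.

(* (A,B) is a (2,2)-modal <(M1,t),(M2,u)>_l-asimulation;
   Theta n  means  P_n \in Theta  (R, R_Box, R_Dia are always in Theta). *)
Definition asimulation (Theta : nat -> Prop) (M1 M2 : model)
    (t : dom M1) (u : dom M2) (l : nat) (A B : tuprel M1 M2) : Prop :=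
  let M := side_model M1 M2 in
  (* A, B are subsets of U_(1)^n x U_(2)^n  u  U_(2)^n x U_(1)^n, n > 0 *)
  (forall i j s s', A i j s s' -> i <> j /\ size s = size s' /\ 0 < size s) /\
  (forall i j s s', B i j s s' -> i <> j /\ size s = size s' /\ 0 < size s) /\
  A S1 S2 [:: t] [:: u] /\
  (forall (i j : side) (m : nat)
          (as_ : seq (dom (M i))) (a c e : dom (M i))
          (bs : seq (dom (M j))) (b d f : dom (M j)),
      size as_ = m -> size bs = m ->
      (forall n, Theta n ->
         A i j (rcons as_ a) (rcons bs b) -> valP n a -> valP n b) /\
      (A i j (rcons as_ a) (rcons bs b) -> relR b d -> m < l ->
         exists c0 : dom (M i), relR a c0 /\
           A i j (rcons (rcons as_ a) c0) (rcons (rcons bs b) d) /\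
           A j i (rcons (rcons bs b) d) (rcons (rcons as_ a) c0)) /\
      (A i j (rcons as_ a) (rcons bs b) -> relR b d -> relB d f -> m.+1 < l ->
         exists (c0 e0 : dom (M i)), relR a c0 /\ relB c0 e0 /\
           A i j (rcons (rcons (rcons as_ a) c0) e0)
                 (rcons (rcons (rcons bs b) d) f)) /\
      (A i j (rcons as_ a) (rcons bs b) -> relR b d -> m.+1 < l ->
         exists c0 : dom (M i), relR a c0 /\
           B i j (rcons (rcons as_ a) c0) (rcons (rcons bs b) d)) /\
      (B i j (rcons as_ a) (rcons bs b) -> relD a c -> m < l ->
         exists d0 : dom (M j), relD b d0 /\
           A i j (rcons (rcons as_ a) c) (rcons (rcons bs b) d0))).

Arguments asimulation Theta M1 M2 t u l A B : clear implicits.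
Arguments sat_at M a phi : clear implicits.

From Pilot Require Import Defs.
From mathcomp Require Import all_boot.
From mathcomp Require Import zify.

(* The standard translation ST22 I x says exactly that I holds at x in the
   intuitionistic Kripke semantics with an R-step in front of every
   implication, box and diamond.  Each clause of a (2,2)-modal asimulation is
   the back-and-forth condition for one connective of that semantics, and
   every R-, R_Box- or R_Dia-step lengthens the related tuples by one, just
   as it costs one quantifier in ST22 I x.  Hence induction on I transfers
   truth of I along A as long as the tuple length plus the quantifier depth
   stays within l; for implications the symmetric clause (A in both
   directions) transfers the antecedent backwards. *)

Fixpoint msat (M : model) (I : mform) (a : dom M) : Prop :=
  match I with
  | MVar n => Defs.valP n a
  | MBot => False
  | MAnd J K => msat M J a /\ msat M K a
  | MOr J K => msat M J a \/ msat M K a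
  | MImp J K => forall c, relR a c -> msat M J c -> msat M K c
  | MBox J => forall c, relR a c -> forall e, relB c e -> msat M J e
  | MDia J => forall c, relR a c -> exists e, relD c e /\ msat M J e
  end.
Arguments msat {M}.

Fixpoint mvars (I : mform) (n : nat) : Prop :=
  match I with
  | MVar k => k = n
  | MBot => False
  | MAnd J K | MOr J K | MImp J K => mvars J n \/ mvars K n
  | MBox J | MDia J => mvars J n
  end.

Fixpoint mdepth (I : mform) : nat :=
  match I with
  | MVar _ | MBot => 0
  | MAnd J K | MOr J K => maxn (mdepth J) (mdepth K)
  | MImp J K => (maxn (mdepth J) (mdepth K)).+1
  | MBox J | MDia J => (mdepth J).+2
  end.

Lemma upd_eq (M : model) (g : nat -> dom M) v a : upd g v a v = a.
Proof. by rewrite /upd eqxx. Qed.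

Lemma upd_lt (M : model) (g : nat -> dom M) v a w : w < v -> upd g v a w = g w.
Proof. by rewrite /upd => /ltn_eqF ->. Qed.

Lemma sat_ST22 (M : model) (I : mform) x (g : nat -> dom M) :
  sat g (ST22 I x) <-> msat I (g x).
Proof.
elim: I x g => [n||J IHJ K IHK|J IHJ K IHK|J IHJ K IHK|J IHJ|J IHJ] x g /=.
- by [].
- by [].
- by rewrite IHJ IHK.
- by rewrite IHJ IHK.
- by split=> H c; move: (H c); rewrite /= IHJ IHK !upd_eq upd_lt.
- split=> H c.
  + move=> Hc e; move: (H c); rewrite /= !upd_eq upd_lt // => /(_ Hc e).
    by rewrite IHJ !upd_eq upd_lt // upd_eq.
  + rewrite /= upd_eq upd_lt // => Hc e.
    by rewrite IHJ !upd_eq upd_lt // upd_eq; apply: H.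
- split=> H c.
  + move=> Hc; move: (H c); rewrite /= !upd_eq upd_lt // => /(_ Hc) [e].
    by rewrite IHJ !upd_eq upd_lt // upd_eq; exists e.
  + rewrite /= upd_eq upd_lt // => /H [e He]; exists e.
    by rewrite IHJ !upd_eq upd_lt // upd_eq.
Qed.

Lemma sat_at_ST22 (M : model) (I : mform) (a : dom M) :
  sat_at M a (ST22 I xvar) <-> msat I a.
Proof.
split=> [H | Ha g ga]; last by rewrite sat_ST22 ga.
by have := H (fun=> a) erefl; rewrite sat_ST22.
Qed.

Lemma occursP_ST22 (I : mform) x n : occursP n (ST22 I x) <-> mvars I n.
Proof.
elim: I x => [k||J IHJ K IHK|J IHJ K IHK|J IHJ K IHK|J IHJ|J IHJ] x /=;
  rewrite ?IHJ ?IHK; tauto.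
Qed.

Lemma qdepth_ST22 (I : mform) x : qdepth (ST22 I x) = mdepth I.
Proof.
elim: I x => [k||J IHJ K IHK|J IHJ K IHK|J IHJ K IHK|J IHJ|J IHJ] x /=;
  rewrite ?IHJ ?IHK //; lia.
Qed.

Section Asimulation.

Variables (Theta : nat -> Prop) (M1 M2 : model) (t : dom M1) (u : dom M2).
Variables (l : nat) (A B : tuprel M1 M2).
Hypothesis asimAB : asimulation Theta M1 M2 t u l A B.

Local Notation M := (side_model M1 M2).

Local Set Implicit Arguments.
Local Unset Strict Implicit.

Section Clauses.

Variables (i j : side) (as_ : seq (dom (M i))) (a : dom (M i)).
Variables (bs : seq (dom (M j))) (b : dom (M j)).
Hypothesis size_as_bs : size as_ = size bs.

Let clauses (c e : dom (M i)) (d f : dom (M j)) :=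
  let: conj _ (conj _ (conj _ H)) := asimAB in
  H i j (size as_) as_ a c e bs b d f erefl (esym size_as_bs).

Lemma asim_valP n :
  Theta n -> A i j (rcons as_ a) (rcons bs b) -> Defs.valP n a -> Defs.valP n b.
Proof. exact: (clauses a a b b).1 n. Qed.

Lemma asim_forth_R d :
  A i j (rcons as_ a) (rcons bs b) -> relR b d -> size as_ < l ->
  exists c, relR a c /\ A i j (rcons (rcons as_ a) c) (rcons (rcons bs b) d) /\
    A j i (rcons (rcons bs b) d) (rcons (rcons as_ a) c).
Proof. exact: (clauses a a d d).2.1. Qed.

Lemma asim_forth_RB d f :
  A i j (rcons as_ a) (rcons bs b) -> relR b d -> relB d f -> (size as_).+1 < l ->
  exists c e, relR a c /\ relB c e /\
    A i j (rcons (rcons (rcons as_ a) c) e) (rcons (rcons (rcons bs b) d) f).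
Proof. exact: (clauses a a d f).2.2.1. Qed.

Lemma asim_forth_RtoB d :
  A i j (rcons as_ a) (rcons bs b) -> relR b d -> (size as_).+1 < l ->
  exists c, relR a c /\ B i j (rcons (rcons as_ a) c) (rcons (rcons bs b) d).
Proof. exact: (clauses a a d d).2.2.2.1. Qed.

Lemma asim_back_D c :
  B i j (rcons as_ a) (rcons bs b) -> relD a c -> size as_ < l ->
  exists d, relD b d /\ A i j (rcons (rcons as_ a) c) (rcons (rcons bs b) d).
Proof. exact: (clauses c c b b).2.2.2.2. Qed.

End Clauses.

Lemma asim_msat (I : mform) : (forall n, mvars I n -> Theta n) ->
  forall i j (as_ : seq (dom (M i))) a (bs : seq (dom (M j))) b,
  size as_ = size bs -> A i j (rcons as_ a) (rcons bs b) ->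
  size as_ + mdepth I <= l -> msat I a -> msat I b.
Proof.
elim: I => [n||J IHJ K IHK|J IHJ K IHK|J IHJ K IHK|J IHJ|J IHJ] /= HT
  i j as_ a bs b sz Aab dl.
- exact: asim_valP (HT n erefl) Aab.
- by [].
- move=> [Ja Ka]; split.
  + by apply: (IHJ (fun n Hn => HT n (or_introl Hn)) i j as_ a bs b) => //; lia.
  + by apply: (IHK (fun n Hn => HT n (or_intror Hn)) i j as_ a bs b) => //; lia.
- move=> [Ja | Ka]; [left | right].
  + by apply: (IHJ (fun n Hn => HT n (or_introl Hn)) i j as_ a bs b) => //; lia.
  + by apply: (IHK (fun n Hn => HT n (or_intror Hn)) i j as_ a bs b) => //; lia.
- move=> JKa d bd Jd.
  have [c [ac [Acd Adc]]] := asim_forth_R sz Aab bd ltac:(lia).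
  have sz' : size (rcons as_ a) = size (rcons bs b) by rewrite !size_rcons sz.
  have Jc : msat J c.
    apply: (IHJ (fun n Hn => HT n (or_introl Hn)) _ _ _ _ _ _ (esym sz') Adc) => //.
    by rewrite size_rcons; lia.
  apply: (IHK (fun n Hn => HT n (or_intror Hn)) _ _ _ _ _ _ sz' Acd _ (JKa c ac Jc)).
  by rewrite size_rcons; lia.
- move=> Ja d bd f df.
  have [c [e [ac [ce Aef]]]] := asim_forth_RB sz Aab bd df ltac:(lia).
  apply: (IHJ HT _ _ _ _ _ _ _ Aef _ (Ja c ac e ce)); rewrite ?size_rcons ?sz //; lia.
- move=> Ja d bd.
  have [c [ac Bcd]] := asim_forth_RtoB sz Aab bd ltac:(lia).
  have [e [ce Je]] := Ja c ac.
  have sz' : size (rcons as_ a) = size (rcons bs b) by rewrite !size_rcons sz.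
  have [f [df Aef]] := asim_back_D sz' Bcd ce ltac:(rewrite size_rcons; lia).
  exists f; split=> //.
  by apply: (IHJ HT _ _ _ _ _ _ _ Aef _ Je); rewrite ?size_rcons ?sz //; lia.
Qed.

End Asimulation.

Theorem mainTheorem3 (I : mform) (Theta : nat -> Prop)
  (M1 M2 : model) (t : dom M1) (u : dom M2) (l : nat) (A B : tuprel M1 M2) :
  (forall n, occursP n (ST22 I xvar) -> Theta n) ->
  asimulation Theta M1 M2 t u l A B ->
  forall (i j : side) (m : nat)
         (as_ : seq (dom (side_model M1 M2 i))) (a : dom (side_model M1 M2 i))
         (bs : seq (dom (side_model M1 M2 j))) (b : dom (side_model M1 M2 j)),
    size as_ = m -> size bs = m ->
    A i j (rcons as_ a) (rcons bs b) ->
    m + qdepth (ST22 I xvar) <= l ->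
    sat_at (side_model M1 M2 i) a (ST22 I xvar) ->
    sat_at (side_model M1 M2 j) b (ST22 I xvar).
Proof.
move=> HT asimAB i j m as_ a bs b <- size_bs Aab.
rewrite qdepth_ST22 !sat_at_ST22.
apply: (asim_msat asimAB _ _ Aab) => //.
by move=> n; rewrite -(occursP_ST22 I xvar); apply: HT.
Qed.
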